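(* For any program $\Omega$ with weight constraints, the map $Z\mapsto Z\setminus Q_\Omega$ is a one-to-one correspondence between the answer sets of the nonnested translation $[\Omega]^{nn}$ and the answer sets of $\Omega$, where $Q_\Omega$ is the set of all new atoms (negation atoms and weight atoms) occurring in $[\Omega]^{nn}$.
   Context: Programs with nested expressions. A literal is a propositional atom $a$ or its classical negation $\neg a$; a set of literals is consistent if it contains no pair $a,\neg a$. Elementary formulas are literals, $\bot$ and $\top$. Formulas are built from elementary formulas using the unary connective $\mathit{not}$ (negation as failure) and the binary connectives '','' (conjunction) and '';'' (disjunction). A rule with nested expressions has the form $\mathit{Head}\leftarrow \mathit{Body}$ where $\mathit{Head},\mathit{Body}$ are formulas (a formula $F$ alone stands for $F\leftarrow\top$); a program with nested expressions is a set of such rules. For a consistent set $Z$ of literals: $Z\models l$ iff $l\in Z$ for a literal $l$; $Z\models\top$; $Z\not\models\bot$; $Z\models(F,G)$ iff $Z\models F$ and $Z\models G$; $Z\models(F;G)$ iff $Z\models F$ or $Z\models G$; $Z\models \mathit{not}\,F$ iff $Z\not\models F$. $Z$ satisfies a program if for every rule, $Z\models\mathit{Body}$ implies $Z\models\mathit{Head}$. The reduct $F^Z$: $F^Z=F$ for elementary $F$; $(F,G)^Z=F^Z,G^Z$; $(F;G)^Z=F^Z;G^Z$; $(\mathit{not}\,F)^Z=\bot$ if $Z\models F$ and $\top$ otherwise. $\Pi^Z$ is the set of rules $\mathit{Head}^Z\leftarrow\mathit{Body}^Z$ for the rules of $\Pi$. A consistent set $Z$ is an answer set of a program without $\mathit{not}$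 if it is a minimal (under inclusion) consistent set of literals satisfying it; $Z$ is an answer set of an arbitrary program $\Pi$ if $Z$ is an answer set of $\Pi^Z$. A nonnested rule is one whose head is a literal or $\bot$ and whose body is a conjunction of literals, each possibly prefixed with $\mathit{not}$. Programs with weight constraints. A rule element is a literal $l$ (positive) or $\mathit{not}\ l$ (negative); $Z\models c$ for a rule element is as for formulas. A weight constraint is $L\le\{c_1=w_1,\dots,c_m=w_m\}\le U$ where $L,U$ are real numbers or $\pm\infty$, $c_1,\dots,c_m$ ($m\ge0$) are rule elements and $w_1,\dots,w_m$ are nonnegative reals. A rule with weight constraints is $C_0\leftarrow C_1,\dots,C_n$ ($n\ge0$) with weight constraints $C_i$; the rule elements of $C_0$ are its head elements. A program with weight constraints is a set of such rules. A literal $c$ is identified with the constraint $1\le\{c=1\}$. A consistent set $Z$ of literals satisfies the weight constraint above if $L\le\sum_{j:Z\models c_j}w_j\le U$, and satisfies a program $\Omega$ if for every rule, whenever $Z$ satisfies $C_1,\dots,C_n$ it satisfies $C_0$. The reduct $(L\le S)^Z$ is $L^Z\le S'$ where $S'$ is obtained from $S$ by dropping all pairs $c=w$ with $c$ negative, and $L^Z$ is $L$ minus the sum of the weights $w$ of the pairs $c=w$ in $S$ with $c$ negative and $Z\models c$. The reduct of a rule $L_0\le S_0\le U_0\leftarrow L_1\le S_1\le U_1,\dots,L_n\le S_n\le U_n$ w.r.t. $Z$ is, if $Z\models S_i\le U_i$ for all $1\le i\le n$, the set of rules $l\leftarrow (L_1\le S_1)^Z,\dots,(L_n\le S_n)^Z$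 for all positive head elements $l$ with $Z\models l$; otherwise it is empty. $\Omega^Z$ is the union of the reducts of the rules of $\Omega$; it has a unique minimal satisfying set of literals, $\mathit{cl}(\Omega^Z)$. $Z$ is an answer set of $\Omega$ if $Z\models\Omega$ and $\mathit{cl}(\Omega^Z)=Z$. Nonnested translation. For each literal $l$ there is a new atom $q_{\mathit{not}\,l}$ (negation atom), and for each real $w$ (or $\pm\infty$) and each expression $S=\{c_1=w_1,\dots,c_m=w_m\}$ there are new atoms $q_{w\le S}$ and $q_{w<S}$ (weight atoms); all new atoms are distinct and do not occur in $\Omega$. For $m>0$, $S'$ denotes $\{c_1=w_1,\dots,c_{m-1}=w_{m-1}\}$. A nonnested program $\Pi$ is closed if: for each atom $q_{w\le S}$ occurring in $\Pi$, $\Pi$ contains the rule $q_{w\le S}$ (i.e. $q_{w\le S}\leftarrow\top$) if $w\le0$, and the rules $q_{w\le S}\leftarrow q_{w\le S'}$ and $q_{w\le S}\leftarrow c_m,q_{w-w_m\le S'}$ if $0<w\le w_1+\dots+w_m$; and for each atom $q_{w<S}$ occurring in $\Pi$, $\Pi$ contains the rule $q_{w<S}$ if $w<0$, and the rules $q_{w<S}\leftarrow q_{w<S'}$ and $q_{w<S}\leftarrow c_m,q_{w-w_m<S'}$ if $0\le w<w_1+\dots+w_m$. For a weight constraint, $[L\le S\le U]^{nn}$ is the conjunction $q_{L\le S},\mathit{not}\,q_{U<S}$. $[\Omega]^{nn}$ is the smallest closed program containing, for every rule $L_0\le S_0\le U_0\leftarrow C_1,\dots,C_n$ of $\Omega$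 and each of its positive head elements $l$, the rules $q_{\mathit{not}\,l}\leftarrow\mathit{not}\,l$ and $l\leftarrow\mathit{not}\,q_{\mathit{not}\,l},[C_1]^{nn},\dots,[C_n]^{nn}$, together with the rules $\bot\leftarrow\mathit{not}\,q_{L_0\le S_0},[C_1]^{nn},\dots,[C_n]^{nn}$ and $\bot\leftarrow q_{U_0<S_0},[C_1]^{nn},\dots,[C_n]^{nn}$. *)

From Stdlib Require Import Reals List ClassicalEpsilon.
From Coquelicot Require Import Rbar.
Import ListNotations.
Open Scope R_scope.

Set Implicit Arguments.

(** A literal is an atom [a] or its classical negation [~a]. *)
Inductive lit (A : Type) : Type := Pos (a : A) | Neg (a : A).
Arguments Pos {A} a.
Arguments Neg {A} a.

Definition litset (A : Type) := lit A -> Prop.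

Definition consistent {A} (Z : litset A) : Prop :=
  forall a, ~ (Z (Pos a) /\ Z (Neg a)).

Inductive formula (A : Type) : Type :=
| FLit (l : lit A)
| FBot
| FTop
| FNot (F : formula A)                 (* negation as failure *)
| FAnd (F G : formula A)
| FOr (F G : formula A).
Arguments FBot {A}.
Arguments FTop {A}.

Fixpoint fsat {A} (Z : litset A) (F : formula A) : Prop :=
  match F with
  | FLit l => Z l
  | FBot => False
  | FTop => True
  | FNot G => ~ fsat Z G
  | FAnd G H => fsat Z G /\ fsat Z H
  | FOr G H => fsat Z G \/ fsat Z H
  end.

(** A rule [Head <- Body] is the pair (Head, Body). *)
Definition nrule (A : Type) := (formula A * formula A)%type.
Definition nprogram (A : Type) := nrule A -> Prop.

Definition psat {A} (Z : litset A) (P : nprogram A) : Prop :=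
  forall r, P r -> fsat Z (snd r) -> fsat Z (fst r).

Fixpoint freduct {A} (Z : litset A) (F : formula A) : formula A :=
  match F with
  | FNot G => if excluded_middle_informative (fsat Z G) then FBot else FTop
  | FAnd G H => FAnd (freduct Z G) (freduct Z H)
  | FOr G H => FOr (freduct Z G) (freduct Z H)
  | FLit l => FLit l
  | FBot => FBot
  | FTop => FTop
  end.

Definition preduct {A} (P : nprogram A) (Z : litset A) : nprogram A :=
  fun r => exists r0, P r0 /\ r = (freduct Z (fst r0), freduct Z (snd r0)).

Definition answer_set_notfree {A} (P : nprogram A) (Z : litset A) : Prop :=
  consistent Z /\ psat Z P /\
  forall Y : litset A, consistent Y -> psat Y P ->
    (forall l, Y l -> Z l) -> forall l, Z l -> Y l.

Definition answer_set {A} (P : nprogram A) (Z : litset A) : Prop :=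
  answer_set_notfree (preduct P Z) Z.

(** Rule element: [(true, l)] is the positive element [l],
    [(false, l)] is the negative element [not l]. *)
Definition relem (A : Type) := (bool * lit A)%type.

Definition esat {A} (Z : litset A) (c : relem A) : Prop :=
  if fst c then Z (snd c) else ~ Z (snd c).

(** Weight constraint  L <= {c1 = w1, ..., cm = wm} <= U. *)
Record wconstr (A : Type) := WC {
  wlo : Rbar;
  welems : list (relem A * R);
  whi : Rbar }.

Record wrule (A : Type) := WR {
  whead : wconstr A;
  wbody : list (wconstr A) }.

Definition wprogram (A : Type) := wrule A -> Prop.

Definition sumw {A} (S : list (relem A * R)) : R :=
  fold_right (fun (p : relem A * R) (acc : R) => snd p + acc) 0 S.

Definition wsum {A} (Z : litset A) (S : list (relem A * R)) : R :=
  fold_right (fun (p : relem A * R) (acc : R) =>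
    (if excluded_middle_informative (esat Z (fst p)) then snd p else 0) + acc) 0 S.

Definition wcsat {A} (Z : litset A) (C : wconstr A) : Prop :=
  Rbar_le (wlo C) (Finite (wsum Z (welems C))) /\
  Rbar_le (Finite (wsum Z (welems C))) (whi C).

Definition wpsat {A} (Z : litset A) (O : wprogram A) : Prop :=
  forall r, O r -> (forall C, In C (wbody r) -> wcsat Z C) -> wcsat Z (whead r).

Definition pos_part {A} (S : list (relem A * R)) : list (lit A * R) :=
  flat_map (fun p : relem A * R => if fst (fst p) then [(snd (fst p), snd p)] else []) S.

Definition neg_sat_sum {A} (Z : litset A) (S : list (relem A * R)) : R :=
  fold_right (fun (p : relem A * R) (acc : R) =>
    (if fst (fst p) then 0
     else if excluded_middle_informative (esat Z (fst p)) then snd p else 0)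
    + acc) 0 S.

Definition lconstr (A : Type) := (Rbar * list (lit A * R))%type.

Definition lreduct {A} (Z : litset A) (C : wconstr A) : lconstr A :=
  (Rbar_minus (wlo C) (Finite (neg_sat_sum Z (welems C))), pos_part (welems C)).

(** Rules of the reduct: [l <- (L1 <= S1)^Z, ..., (Ln <= Sn)^Z]. *)
Definition drule (A : Type) := (lit A * list (lconstr A))%type.

Definition wreduct {A} (O : wprogram A) (Z : litset A) : drule A -> Prop :=
  fun dr => exists r, O r /\
    (forall C, In C (wbody r) -> Rbar_le (Finite (wsum Z (welems C))) (whi C)) /\
    (exists w, In ((true, fst dr), w) (welems (whead r))) /\
    Z (fst dr) /\
    snd dr = map (lreduct Z) (wbody r).

Definition psum {A} (Y : litset A) (S : list (lit A * R)) : R :=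
  fold_right (fun (p : lit A * R) (acc : R) =>
    (if excluded_middle_informative (Y (fst p)) then snd p else 0) + acc) 0 S.

Definition dsat {A} (Y : litset A) (D : drule A -> Prop) : Prop :=
  forall dr, D dr ->
    (forall LC, In LC (snd dr) -> Rbar_le (fst LC) (Finite (psum Y (snd LC)))) ->
    Y (fst dr).

Definition cl {A} (O : wprogram A) (Z : litset A) : litset A :=
  fun l => forall Y : litset A, dsat Y (wreduct O Z) -> Y l.

Definition w_answer_set {A} (O : wprogram A) (Z : litset A) : Prop :=
  consistent Z /\ wpsat Z O /\ (forall l, cl O Z l <-> Z l).

(** All weights of Omega are nonnegative (part of the definition of a
    weight constraint). *)
Definition nonneg_weights {A} (O : wprogram A) : Prop :=
  forall r C p, O r -> (C = whead r \/ In C (wbody r)) -> In p (welems C) -> 0 <= snd p.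

(** Atoms of the translated program: original atoms plus the new atoms
    q_{not l}, q_{w <= S}, q_{w < S} (pairwise distinct by construction). *)
Inductive xatom (A : Type) : Type :=
| Orig (a : A)
| QNot (l : lit A)
| QLe (w : Rbar) (S : list (relem A * R))
| QLt (w : Rbar) (S : list (relem A * R)).

Definition liftl {A} (l : lit A) : lit (xatom A) :=
  match l with Pos a => Pos (Orig a) | Neg a => Neg (Orig a) end.

Definition qatom {A} (q : xatom A) : formula (xatom A) := FLit (Pos q).

Definition lift_elem {A} (c : relem A) : formula (xatom A) :=
  if fst c then FLit (liftl (snd c)) else FNot (FLit (liftl (snd c))).

Fixpoint conj {X} (l : list (formula X)) : formula X :=
  match l with
  | [] => FTop
  | [F] => F
  | F :: l' => FAnd F (conj l')
  end.

Definition constr_nn {A} (C : wconstr A) : list (formula (xatom A)) :=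
  [qatom (QLe (wlo C) (welems C)); FNot (qatom (QLt (whi C) (welems C)))].

Definition body_nn {A} (Cs : list (wconstr A)) : list (formula (xatom A)) :=
  flat_map constr_nn Cs.

Fixpoint fatom {X} (q : X) (F : formula X) : Prop :=
  match F with
  | FLit (Pos a) => a = q
  | FLit (Neg a) => a = q
  | FBot => False
  | FTop => False
  | FNot G => fatom q G
  | FAnd G H => fatom q G \/ fatom q H
  | FOr G H => fatom q G \/ fatom q H
  end.

Definition occurs {X} (q : X) (r : nrule X) : Prop := fatom q (fst r) \/ fatom q (snd r).

Inductive nn {A} (O : wprogram A) : nprogram (xatom A) :=
| nn_qnot : forall r l w, O r -> In ((true, l), w) (welems (whead r)) ->
    nn O (qatom (QNot l), FNot (FLit (liftl l)))
| nn_head : forall r l w, O r -> In ((true, l), w) (welems (whead r)) ->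
    nn O (FLit (liftl l), conj (FNot (qatom (QNot l)) :: body_nn (wbody r)))
| nn_lo : forall r, O r ->
    nn O (FBot, conj (FNot (qatom (QLe (wlo (whead r)) (welems (whead r))))
                      :: body_nn (wbody r)))
| nn_hi : forall r, O r ->
    nn O (FBot, conj (qatom (QLt (whi (whead r)) (welems (whead r)))
                      :: body_nn (wbody r)))
| nn_le_fact : forall r w S, nn O r -> occurs (QLe w S) r ->
    Rbar_le w (Finite 0) ->
    nn O (qatom (QLe w S), FTop)
| nn_le_skip : forall r x S' c wm, nn O r ->
    occurs (QLe (Finite x) (S' ++ [(c, wm)])) r ->
    0 < x -> x <= sumw (S' ++ [(c, wm)]) ->
    nn O (qatom (QLe (Finite x) (S' ++ [(c, wm)])), qatom (QLe (Finite x) S'))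
| nn_le_take : forall r x S' c wm, nn O r ->
    occurs (QLe (Finite x) (S' ++ [(c, wm)])) r ->
    0 < x -> x <= sumw (S' ++ [(c, wm)]) ->
    nn O (qatom (QLe (Finite x) (S' ++ [(c, wm)])),
          conj [lift_elem c; qatom (QLe (Finite (x - wm)) S')])
| nn_lt_fact : forall r w S, nn O r -> occurs (QLt w S) r ->
    Rbar_lt w (Finite 0) ->
    nn O (qatom (QLt w S), FTop)
| nn_lt_skip : forall r x S' c wm, nn O r ->
    occurs (QLt (Finite x) (S' ++ [(c, wm)])) r ->
    0 <= x -> x < sumw (S' ++ [(c, wm)]) ->
    nn O (qatom (QLt (Finite x) (S' ++ [(c, wm)])), qatom (QLt (Finite x) S'))
| nn_lt_take : forall r x S' c wm, nn O r ->
    occurs (QLt (Finite x) (S' ++ [(c, wm)])) r ->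
    0 <= x -> x < sumw (S' ++ [(c, wm)]) ->
    nn O (qatom (QLt (Finite x) (S' ++ [(c, wm)])),
          conj [lift_elem c; qatom (QLt (Finite (x - wm)) S')]).

Definition Qset {A} (O : wprogram A) (q : xatom A) : Prop :=
  (forall a, q <> Orig a) /\ exists r, nn O r /\ occurs q r.

Definition strip {A} (O : wprogram A) (Z : litset (xatom A)) : litset (xatom A) :=
  fun x => Z x /\ ~ (exists q, Qset O q /\ x = Pos q).

Definition embed {A} (X : litset A) : litset (xatom A) :=
  fun x => exists l, X l /\ x = liftl l.

(* An answer set Z of [O]^nn is determined by its restriction X to the
   literals of O: a negation atom q_{not l} holds iff l is not in X, and a
   weight atom q_{w <= S} (resp. q_{w < S}) of Q_O holds iff the elements of S
   satisfied by X weigh at least (resp. more than) w.  Conversely, for any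
   such X, the reduct of [O]^nn w.r.t. this expansion of X derives exactly
   these weight atoms, through the chain of closure rules that peel off the
   last element of S one at a time (this needs nonnegative weights, so that
   partial sums grow along the chain); its literal rules then simulate O^X and
   its constraint rules say that X satisfies O. *)

From Stdlib Require Import Reals List Lra.
From Stdlib Require Import Classical ClassicalEpsilon FunctionalExtensionality PropExtensionality.
From Coquelicot Require Import Rbar.
Import ListNotations.
Open Scope R_scope.

(* Weight atoms q_{w <= S} and q_{w < S} are handled uniformly: [strict]
   selects between them. *)
Definition Rbar_cmp (strict : bool) (x y : Rbar) : Prop :=
  if strict then Rbar_lt x y else Rbar_le x y.

Lemma Rbar_cmp_le_trans s w a b :
  Rbar_cmp s w (Finite a) -> a <= b -> Rbar_cmp s w (Finite b).
Proof. destruct s, w; simpl; auto; lra. Qed.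

Lemma Rbar_cmp_finite s w a :
  ~ Rbar_cmp s w (Finite 0) -> Rbar_cmp s w (Finite a) -> exists x, w = Finite x.
Proof. destruct s, w; simpl; try tauto; eauto. Qed.

Lemma Rbar_cmp_shift s x a w :
  Rbar_cmp s (Finite (x - w)) (Finite a) <-> Rbar_cmp s (Finite x) (Finite (a + w)).
Proof. destruct s; simpl; lra. Qed.

Section WeightSums.

Context {A : Type}.
Implicit Types (Y W : litset A) (S : list (relem A * R)).

Definition weights_nonneg S : Prop := Forall (fun p : relem A * R => 0 <= snd p) S.

(* The value of [S] in the reduct w.r.t. [W], evaluated at [Y]: positive
   elements are read in [Y], negative ones are frozen by [W].  [rsum X X] is
   [wsum X] by conversion. *)
Definition rsat Y W (c : relem A) : Prop := if fst c then Y (snd c) else ~ W (snd c).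

Definition rsum Y W S : R :=
  fold_right (fun (p : relem A * R) (acc : R) =>
    (if excluded_middle_informative (rsat Y W (fst p)) then snd p else 0) + acc) 0 S.

Lemma rsum_app Y W S1 S2 : rsum Y W (S1 ++ S2) = rsum Y W S1 + rsum Y W S2.
Proof. induction S1 as [|p S1 IH]; simpl; [lra|]. rewrite IH; lra. Qed.

Lemma rsum_snoc Y W S c w :
  rsum Y W (S ++ [(c, w)]) =
  rsum Y W S + (if excluded_middle_informative (rsat Y W c) then w else 0).
Proof. rewrite rsum_app; simpl; lra. Qed.

Lemma rsum_split Y W S : rsum Y W S = neg_sat_sum W S + psum Y (pos_part S).
Proof.
  induction S as [|[[[|] l] w] S IH]; simpl; [lra| |];
    unfold rsat, esat; simpl;
    repeat destruct excluded_middle_informative; simpl; try tauto; rewrite IH; lra.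
Qed.

Lemma weights_nonneg_snoc S c w :
  weights_nonneg (S ++ [(c, w)]) -> weights_nonneg S /\ 0 <= w.
Proof. intros H; apply Forall_app in H as [H1 H2]; inversion H2; auto. Qed.

Lemma rsum_bounds Y W S : weights_nonneg S -> 0 <= rsum Y W S <= sumw S.
Proof.
  induction 1 as [|p S Hp _ IH]; simpl; [lra|].
  destruct excluded_middle_informative; lra.
Qed.

Lemma rsum_mono Y Y' W W' S : weights_nonneg S ->
  (forall l, Y l -> Y' l) -> (forall l, W' l -> W l) -> rsum Y W S <= rsum Y' W' S.
Proof.
  intros HS HY HW; induction HS as [|[[[|] l] w] S Hp _ IH]; simpl in *; [lra| |];
    unfold rsat in *; simpl in *;
    repeat destruct excluded_middle_informative; try lra; exfalso; auto.
Qed.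

Lemma rsum_fact s w Y W S : weights_nonneg S ->
  Rbar_cmp s w (Finite 0) -> Rbar_cmp s w (Finite (rsum Y W S)).
Proof. intros HS H; apply (Rbar_cmp_le_trans _ _ 0); auto. apply rsum_bounds; auto. Qed.

Lemma rsum_skip s x Y W S c wm : 0 <= wm ->
  Rbar_cmp s x (Finite (rsum Y W S)) -> Rbar_cmp s x (Finite (rsum Y W (S ++ [(c, wm)]))).
Proof.
  intros Hwm H; eapply Rbar_cmp_le_trans; [exact H|].
  rewrite rsum_snoc; destruct excluded_middle_informative; lra.
Qed.

Lemma rsum_take s x Y W S c wm : rsat Y W c ->
  Rbar_cmp s (Finite (x - wm)) (Finite (rsum Y W S)) ->
  Rbar_cmp s (Finite x) (Finite (rsum Y W (S ++ [(c, wm)]))).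
Proof.
  intros Hc H; rewrite rsum_snoc.
  destruct excluded_middle_informative; [|contradiction].
  now apply Rbar_cmp_shift.
Qed.

Lemma lreduct_sat Y W C :
  Rbar_le (fst (lreduct W C)) (Finite (psum Y (snd (lreduct W C)))) <->
  Rbar_le (wlo C) (Finite (rsum Y W (welems C))).
Proof. simpl; rewrite rsum_split; destruct (wlo C); simpl; try tauto; lra. Qed.

End WeightSums.

Lemma litset_ext {X} (Y Z : litset X) : (forall x, Y x <-> Z x) -> Y = Z.
Proof.
  intros H; apply functional_extensionality; intros x.
  apply propositional_extensionality, H.
Qed.

Section Reducts.

Context {X : Type}.
Implicit Types (Y Z : litset X) (F G : formula X) (P : nprogram X).

Lemma fsat_freduct_self Z F : fsat Z (freduct Z F) <-> fsat Z F.
Proof.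
  induction F; simpl; try tauto.
  destruct excluded_middle_informative; simpl; tauto.
Qed.

Lemma fsat_freduct_sub Y Z F :
  (forall x, Y x -> Z x) -> fsat Y (freduct Z F) -> fsat Z F.
Proof.
  intros HYZ; induction F; simpl; try tauto; auto.
  destruct excluded_middle_informative; simpl; tauto.
Qed.

Lemma fsat_freduct_not Y Z G : fsat Y (freduct Z (FNot G)) <-> ~ fsat Z G.
Proof. simpl; destruct excluded_middle_informative; simpl; tauto. Qed.

Lemma freduct_conj Z l : freduct Z (conj l) = conj (map (freduct Z) l).
Proof.
  induction l as [|F [|G l] IH]; simpl in *; auto.
  rewrite IH; reflexivity.
Qed.

Lemma fsat_conj_cons Y F l : fsat Y (conj (F :: l)) <-> fsat Y F /\ fsat Y (conj l).
Proof. destruct l; simpl; tauto. Qed.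

Lemma fsat_conj Y l : fsat Y (conj l) <-> forall F, In F l -> fsat Y F.
Proof.
  induction l as [|F l IH]; [simpl; firstorder|].
  rewrite fsat_conj_cons, IH; simpl; firstorder congruence.
Qed.

Lemma fsat_freduct_cons Y Z F l :
  fsat Y (freduct Z (conj (F :: l))) <-> fsat Y (freduct Z F) /\ fsat Y (freduct Z (conj l)).
Proof. rewrite !freduct_conj; simpl; apply fsat_conj_cons. Qed.

Lemma fatom_conj (q : X) l : fatom q (conj l) <-> exists F, In F l /\ fatom q F.
Proof.
  induction l as [|F [|G l] IH]; simpl in *; [firstorder| |].
  - split; [eauto|]. intros (F' & [<-|[]] & H); auto.
  - rewrite IH; firstorder congruence.
Qed.

Lemma fatom_conj_cons (q : X) F l : fatom q (conj (F :: l)) <-> fatom q F \/ fatom q (conj l).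
Proof. rewrite !fatom_conj; simpl; firstorder congruence. Qed.

Definition reduct_model P Y Z : Prop :=
  forall r, P r -> fsat Y (freduct Z (snd r)) -> fsat Y (freduct Z (fst r)).

Lemma reduct_model_self P Z : reduct_model P Z Z <-> psat Z P.
Proof.
  unfold reduct_model, psat; split; intros H r Hr; specialize (H r Hr);
    rewrite ?fsat_freduct_self in *; auto.
Qed.

Lemma answer_set_iff P Z :
  answer_set P Z <->
  consistent Z /\ psat Z P /\
  (forall Y, (forall x, Y x -> Z x) -> reduct_model P Y Z -> forall x, Z x -> Y x).
Proof.
  rewrite <- reduct_model_self.
  assert (Hred : forall Y, psat Y (preduct P Z) <-> reduct_model P Y Z).
  { intros Y; split.
    - intros H r Hr; apply (H (_, _)); exists r; auto.
    - intros H r' [r [Hr ->]]; apply H; auto. }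
  unfold answer_set, answer_set_notfree; rewrite Hred; split.
  - intros (HC & HM & Hmin); repeat split; auto.
    intros Y HYZ HY; apply Hmin; auto; [|now apply Hred].
    intros a [H1 H2]; apply (HC a); auto.
  - intros (HC & HM & Hmin); repeat split; auto.
    intros Y _ HY HYZ; apply Hmin; auto; now apply Hred.
Qed.

End Reducts.

Section Translation.

Context {A : Type}.
Variable O : wprogram A.
Hypothesis Hw : nonneg_weights O.

Definition qw (s : bool) (w : Rbar) (S : list (relem A * R)) : xatom A :=
  if s then QLt w S else QLe w S.

Definition restrict (Z : litset (xatom A)) : litset A := fun l => Z (liftl l).

Lemma qw_not_orig s w S a : qw s w S <> Orig a.
Proof. destruct s; discriminate. Qed.

Lemma fsat_freduct_lift_elem (Y Z : litset (xatom A)) c :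
  fsat Y (freduct Z (lift_elem c)) <-> rsat (restrict Y) (restrict Z) c.
Proof.
  destruct c as [[|] l]; unfold lift_elem, rsat, restrict; simpl; [tauto|].
  destruct excluded_middle_informative; simpl; tauto.
Qed.

Lemma fsat_freduct_body (Y Z : litset (xatom A)) Cs :
  fsat Y (freduct Z (conj (body_nn Cs))) <->
  forall C, In C Cs ->
    Y (Pos (QLe (wlo C) (welems C))) /\ ~ Z (Pos (QLt (whi C) (welems C))).
Proof.
  rewrite freduct_conj, fsat_conj; unfold body_nn; split.
  - intros H C HC; split;
      [apply (H (freduct Z (qatom (QLe (wlo C) (welems C)))))
      |apply (fsat_freduct_not Y Z (qatom (QLt (whi C) (welems C)))), H];
      apply in_map, in_flat_map; exists C; simpl; auto.
  - intros H F HF.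
    apply in_map_iff in HF as (G & <- & HG); apply in_flat_map in HG as (C & HC & HG).
    destruct (H C HC) as [HL HU]; destruct HG as [<-|[<-|[]]]; [exact HL|].
    now apply fsat_freduct_not.
Qed.

Lemma fatom_liftl (q : xatom A) l : fatom q (FLit (liftl l)) -> exists a, q = Orig a.
Proof. destruct l; simpl; eauto. Qed.

Lemma fatom_lift_elem (q : xatom A) c : fatom q (lift_elem c) -> exists a, q = Orig a.
Proof. destruct c as [[|] l]; apply fatom_liftl. Qed.

Lemma fatom_body_nn (q : xatom A) Cs :
  fatom q (conj (body_nn Cs)) <->
  exists C, In C Cs /\ (q = QLe (wlo C) (welems C) \/ q = QLt (whi C) (welems C)).
Proof.
  rewrite fatom_conj; unfold body_nn; split.
  - intros (F & HF & Hq); apply in_flat_map in HF as (C & HC & HF).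
    exists C; split; auto; destruct HF as [<-|[<-|[]]]; simpl in Hq; auto.
  - intros (C & HC & [->| ->]);
      [exists (qatom (QLe (wlo C) (welems C)))|exists (FNot (qatom (QLt (whi C) (welems C))))];
      (split; [apply in_flat_map; exists C; simpl; auto|reflexivity]).
Qed.

Definition atom_weights_nonneg (q : xatom A) : Prop :=
  match q with QLe _ S0 | QLt _ S0 => weights_nonneg S0 | _ => True end.

Lemma body_weights_nonneg r q :
  O r -> fatom q (conj (body_nn (wbody r))) -> atom_weights_nonneg q.
Proof.
  intros Hr Hq; apply fatom_body_nn in Hq as (C & HC & [->| ->]);
    apply Forall_forall; intros p Hp; eapply Hw; eauto.
Qed.

Lemma head_weights_nonneg r : O r -> weights_nonneg (welems (whead r)).
Proof. intros Hr; apply Forall_forall; intros p Hp; eapply Hw; eauto. Qed.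

Lemma nn_atom_weights_nonneg r q : nn O r -> occurs q r -> atom_weights_nonneg q.
Proof.
  assert (Horig : forall q F, (fatom q F -> exists a, q = Orig a) -> fatom q F ->
                    atom_weights_nonneg q) by (intros q' F H Hq; now destruct (H Hq) as [a ->]).
  intros Hr; revert q; induction Hr as [r l w Hr _|r l w Hr _|r Hr|r Hr|r w S _ IH Ho _
                 |r x S c wm _ IH Ho _ _|r x S c wm _ IH Ho _ _
                 |r w S _ IH Ho _|r x S c wm _ IH Ho _ _|r x S c wm _ IH Ho _ _];
    intros q; unfold occurs; cbn [fst snd]; rewrite ?fatom_conj_cons; intros Hq.
  - destruct Hq as [<-|Hq]; [exact I|exact (Horig _ _ (fatom_liftl q l) Hq)].
  - destruct Hq as [Hq|[Hq|Hq]]; [exact (Horig _ _ (fatom_liftl q l) Hq)|now simpl in Hq; subst|].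
    exact (body_weights_nonneg r q Hr Hq).
  - destruct Hq as [[]|[<-|Hq]]; [exact (head_weights_nonneg r Hr)|].
    exact (body_weights_nonneg r q Hr Hq).
  - destruct Hq as [[]|[<-|Hq]]; [exact (head_weights_nonneg r Hr)|].
    exact (body_weights_nonneg r q Hr Hq).
  - destruct Hq as [<-|[]]; exact (IH _ Ho).
  - specialize (IH _ Ho); destruct Hq as [<-|<-];
      [exact IH|exact (proj1 (weights_nonneg_snoc _ _ _ IH))].
  - specialize (IH _ Ho); destruct Hq as [<-|[Hq|[<-|[]]]];
      [exact IH|exact (Horig _ _ (fatom_lift_elem q c) Hq)
      |exact (proj1 (weights_nonneg_snoc _ _ _ IH))].
  - destruct Hq as [<-|[]]; exact (IH _ Ho).
  - specialize (IH _ Ho); destruct Hq as [<-|<-];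
      [exact IH|exact (proj1 (weights_nonneg_snoc _ _ _ IH))].
  - specialize (IH _ Ho); destruct Hq as [<-|[Hq|[<-|[]]]];
      [exact IH|exact (Horig _ _ (fatom_lift_elem q c) Hq)
      |exact (proj1 (weights_nonneg_snoc _ _ _ IH))].
Qed.

Lemma nn_qnot_rule r l :
  nn O r -> occurs (QNot l) r -> nn O (qatom (QNot l), FNot (FLit (liftl l))).
Proof.
  assert (Hlit : forall l0, ~ fatom (QNot l) (FLit (liftl l0)))
    by (intros l0 Hq; destruct (fatom_liftl _ _ Hq); discriminate).
  assert (Helem : forall c, ~ fatom (QNot l) (lift_elem c))
    by (intros c Hq; destruct (fatom_lift_elem _ _ Hq); discriminate).
  assert (Hbody : forall Cs, ~ fatom (QNot l) (conj (body_nn Cs)))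
    by (intros Cs Hq; apply fatom_body_nn in Hq as (C & _ & [Hq|Hq]); discriminate).
  destruct 1 as [r0 l0 w Hr0 Hin|r0 l0 w Hr0 Hin|r0 Hr0|r0 Hr0|r0 w S _ _ _
                |r0 x S c wm _ _ _ _|r0 x S c wm _ _ _ _
                |r0 w S _ _ _|r0 x S c wm _ _ _ _|r0 x S c wm _ _ _ _];
    unfold occurs; cbn [fst snd]; rewrite ?fatom_conj_cons; intros Ho;
    repeat destruct Ho as [Ho|Ho]; try contradiction;
    try (exfalso; eapply Hlit; exact Ho); try (exfalso; eapply Helem; exact Ho);
    try (exfalso; eapply Hbody; exact Ho); simpl in Ho; try discriminate.
  - injection Ho as ->; exact (nn_qnot O r0 l w Hr0 Hin).
  - injection Ho as ->; exact (nn_qnot O r0 l w Hr0 Hin).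
Qed.

Lemma Qset_occurs r q : nn O r -> occurs q r -> (forall a, q <> Orig a) -> Qset O q.
Proof. intros Hr Ho Hq; split; eauto. Qed.

Lemma Qset_body r F Cs C : nn O r -> snd r = conj (F :: body_nn Cs) -> In C Cs ->
  Qset O (QLe (wlo C) (welems C)) /\ Qset O (QLt (whi C) (welems C)).
Proof.
  intros Hr Hs HC; split; apply (Qset_occurs r); try discriminate; auto;
    right; rewrite Hs, fatom_conj_cons, fatom_body_nn; right; exists C; auto.
Qed.

Lemma Qset_weights_nonneg s w S : Qset O (qw s w S) -> weights_nonneg S.
Proof. intros [_ (r & Hr & Ho)]; destruct s; exact (nn_atom_weights_nonneg _ _ Hr Ho). Qed.

Lemma nn_weight_fact s r w S : nn O r -> occurs (qw s w S) r ->
  Rbar_cmp s w (Finite 0) -> nn O (qatom (qw s w S), FTop).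
Proof. destruct s; [apply nn_lt_fact|apply nn_le_fact]. Qed.

Lemma nn_weight_skip s r x S c wm : nn O r -> occurs (qw s (Finite x) (S ++ [(c, wm)])) r ->
  ~ Rbar_cmp s (Finite x) (Finite 0) -> Rbar_cmp s (Finite x) (Finite (sumw (S ++ [(c, wm)]))) ->
  nn O (qatom (qw s (Finite x) (S ++ [(c, wm)])), qatom (qw s (Finite x) S)).
Proof. destruct s; simpl; intros; [eapply nn_lt_skip|eapply nn_le_skip]; eauto; lra. Qed.

Lemma nn_weight_take s r x S c wm : nn O r -> occurs (qw s (Finite x) (S ++ [(c, wm)])) r ->
  ~ Rbar_cmp s (Finite x) (Finite 0) -> Rbar_cmp s (Finite x) (Finite (sumw (S ++ [(c, wm)]))) ->
  nn O (qatom (qw s (Finite x) (S ++ [(c, wm)])),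
        conj [lift_elem c; qatom (qw s (Finite (x - wm)) S)]).
Proof. destruct s; simpl; intros; [eapply nn_lt_take|eapply nn_le_take]; eauto; lra. Qed.

(* The bodies of the rules of [[O]^nn] with head q_{w <= S} (strict = false)
   or q_{w < S} (strict = true). *)
Inductive weight_rule : bool -> Rbar -> list (relem A * R) -> formula (xatom A) -> Prop :=
| weight_fact s w S : weights_nonneg S -> Rbar_cmp s w (Finite 0) -> weight_rule s w S FTop
| weight_skip s x S c wm : 0 <= wm ->
    weight_rule s (Finite x) (S ++ [(c, wm)]) (qatom (qw s (Finite x) S))
| weight_take s x S c wm :
    weight_rule s (Finite x) (S ++ [(c, wm)])
      (conj [lift_elem c; qatom (qw s (Finite (x - wm)) S)]).

Lemma nn_cases r : nn O r ->
  (exists l, r = (qatom (QNot l), FNot (FLit (liftl l)))) \/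
  (exists r0 l w, O r0 /\ In ((true, l), w) (welems (whead r0)) /\
     r = (FLit (liftl l), conj (FNot (qatom (QNot l)) :: body_nn (wbody r0)))) \/
  (exists r0, O r0 /\ r = (FBot, conj (FNot (qatom (QLe (wlo (whead r0)) (welems (whead r0))))
                                       :: body_nn (wbody r0)))) \/
  (exists r0, O r0 /\ r = (FBot, conj (qatom (QLt (whi (whead r0)) (welems (whead r0)))
                                       :: body_nn (wbody r0)))) \/
  (exists s w S body, r = (qatom (qw s w S), body) /\ weight_rule s w S body).
Proof.
  destruct 1 as [r0 l w|r0 l w|r0|r0|r0 w S Hr0 Ho H0
                |r0 x S c wm Hr0 Ho|r0 x S c wm Hr0 Ho
                |r0 w S Hr0 Ho H0|r0 x S c wm Hr0 Ho|r0 x S c wm Hr0 Ho];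
    [left; eauto|right; left; eauto 6|do 2 right; left; eauto|do 3 right; left; eauto|..];
    do 4 right; [exists false|exists false|exists false|exists true|exists true|exists true];
    do 3 eexists; (split; [reflexivity|]); pose proof (nn_atom_weights_nonneg _ _ Hr0 Ho) as HN.
  - now apply weight_fact.
  - now apply weight_skip, (weights_nonneg_snoc _ _ _ HN).
  - apply weight_take.
  - now apply weight_fact.
  - now apply weight_skip, (weights_nonneg_snoc _ _ _ HN).
  - apply weight_take.
Qed.

Lemma weight_rule_sound (M Z : litset (xatom A)) (V W : litset A) s w S body :
  weight_rule s w S body ->
  (forall l, M (liftl l) -> V l) -> (forall l, W l -> Z (liftl l)) ->
  (forall s' w' S', M (Pos (qw s' w' S')) -> Rbar_cmp s' w' (Finite (rsum V W S'))) ->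
  fsat M (freduct Z body) -> Rbar_cmp s w (Finite (rsum V W S)).
Proof.
  intros Hrule HV HW Hinv Hbody.
  destruct Hrule as [s w S HS H0|s x S c wm Hwm|s x S c wm].
  - now apply rsum_fact.
  - exact (rsum_skip _ _ _ _ _ _ _ Hwm (Hinv _ _ _ Hbody)).
  - apply fsat_freduct_cons in Hbody as [Hc Hq].
    apply rsum_take; [|exact (Hinv _ _ _ Hq)].
    apply fsat_freduct_lift_elem in Hc.
    destruct c as [[|] l]; unfold rsat, restrict in *; simpl in *; auto.
Qed.

(* The candidate answer set of [[O]^nn] determined by a set [X] of literals of
   [O]: an atom of Q_O holds iff the condition its name expresses holds in [X]. *)
Definition expand (X : litset A) : litset (xatom A) := fun x =>
  match x with
  | Pos (Orig a) => X (Pos a)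
  | Neg (Orig a) => X (Neg a)
  | Pos (QNot l) => Qset O (QNot l) /\ ~ X l
  | Pos (QLe w S0) => Qset O (QLe w S0) /\ Rbar_le w (Finite (wsum X S0))
  | Pos (QLt w S0) => Qset O (QLt w S0) /\ Rbar_lt w (Finite (wsum X S0))
  | Neg _ => False
  end.

Lemma expand_liftl X l : expand X (liftl l) <-> X l.
Proof. destruct l; reflexivity. Qed.

Lemma expand_weight X s w S :
  expand X (Pos (qw s w S)) <-> Qset O (qw s w S) /\ Rbar_cmp s w (Finite (rsum X X S)).
Proof. destruct s; reflexivity. Qed.

Lemma expand_consistent X : consistent X -> consistent (expand X).
Proof. intros HX [a|l|w S|w S] [H1 H2]; simpl in *; try tauto; now apply (HX a). Qed.

(* Every weight atom whose bound is met in the reduct is derived by a chain of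
   skip/take rules, one element of [S] at a time. *)
Lemma weight_complete (Y Z : litset (xatom A)) : reduct_model (nn O) Y Z ->
  forall S s w, Qset O (qw s w S) ->
  Rbar_cmp s w (Finite (rsum (restrict Y) (restrict Z) S)) -> Y (Pos (qw s w S)).
Proof.
  intros HY S; induction S as [|[c wm] S IH] using rev_ind; intros s w HQ Hcmp;
    pose proof HQ as [_ (r & Hr & Ho)];
    (destruct (classic (Rbar_cmp s w (Finite 0))) as [H0|H0];
      [exact (HY _ (nn_weight_fact s _ _ _ Hr Ho H0) I)|]); [contradiction|].
  destruct (Rbar_cmp_finite _ _ _ H0 Hcmp) as [x ->].
  assert (Hrange : Rbar_cmp s (Finite x) (Finite (sumw (S ++ [(c, wm)])))).
  { eapply Rbar_cmp_le_trans; [exact Hcmp|].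
    apply rsum_bounds, (Qset_weights_nonneg _ _ _ HQ). }
  rewrite rsum_snoc in Hcmp; destruct excluded_middle_informative as [Hc|Hc].
  - pose proof (nn_weight_take s _ _ _ _ _ Hr Ho H0 Hrange) as Htake.
    apply (HY _ Htake); cbn [snd]; apply fsat_freduct_cons; split.
    + now apply fsat_freduct_lift_elem.
    + apply IH; [|now apply Rbar_cmp_shift].
      apply (Qset_occurs _ _ Htake); [right; right; reflexivity|apply qw_not_orig].
  - pose proof (nn_weight_skip s _ _ _ _ _ Hr Ho H0 Hrange) as Hskip.
    apply (HY _ Hskip), IH; [|now rewrite Rplus_0_r in Hcmp].
    apply (Qset_occurs _ _ Hskip); [right; reflexivity|apply qw_not_orig].
Qed.

Lemma restrict_expand X : restrict (expand X) = X.
Proof. apply litset_ext, expand_liftl. Qed.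

Lemma xlit_cases (x : lit (xatom A)) :
  (exists l, x = liftl l) \/ (exists l, x = Pos (QNot l)) \/
  (exists s w S, x = Pos (qw s w S)) \/ (exists q, x = Neg q /\ forall a, q <> Orig a).
Proof.
  destruct x as [[a|l|w S|w S]|[a|l|w S|w S]].
  - left; now exists (Pos a).
  - right; left; eauto.
  - do 2 right; left; now exists false, w, S.
  - do 2 right; left; now exists true, w, S.
  - left; now exists (Neg a).
  all: do 3 right; eexists; split; [reflexivity|discriminate].
Qed.

Lemma answer_set_sub_expand Z : answer_set (nn O) Z -> forall x, Z x -> expand (restrict Z) x.
Proof.
  intros HA; apply answer_set_iff in HA as (_ & HM & Hmin).
  set (Y := fun x => Z x /\ expand (restrict Z) x).
  assert (HYZ : forall x, Y x -> Z x) by now intros x [].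
  enough (HZY : forall x, Z x -> Y x) by (intros x Hx; apply HZY, Hx).
  apply Hmin; [exact HYZ|]; intros r Hr HYb.
  assert (HZh : fsat Z (fst r)) by exact (HM r Hr (fsat_freduct_sub _ _ _ HYZ HYb)).
  destruct (nn_cases _ Hr)
    as [(l & ->)|[(r0 & l & w & _ & _ & ->)|[(r0 & _ & ->)|[(r0 & _ & ->)
       |(s & w & S & body & -> & Hrule)]]]]; cbn [fst snd] in *; try contradiction.
  - apply fsat_freduct_not in HYb.
    split; [exact HZh|split; [|exact HYb]].
    apply (Qset_occurs _ _ Hr); [left; reflexivity|discriminate].
  - split; [exact HZh|now apply expand_liftl].
  - split; [exact HZh|apply expand_weight; split].
    + apply (Qset_occurs _ _ Hr); [left; reflexivity|apply qw_not_orig].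
    + apply (weight_rule_sound Y Z _ _ _ _ _ _ Hrule); auto.
      * intros l [Hl _]; exact Hl.
      * intros s' w' S' [_ Hq]; now apply expand_weight in Hq.
Qed.

Lemma expand_sub_answer_set Z : answer_set (nn O) Z -> forall x, expand (restrict Z) x -> Z x.
Proof.
  intros HA; apply answer_set_iff in HA as (_ & HM & _).
  assert (HZ : reduct_model (nn O) Z Z) by now apply reduct_model_self.
  intros x; destruct (xlit_cases x) as [(l & ->)|[(l & ->)|[(s & w & S & ->)|(q & -> & Hq)]]].
  - now apply expand_liftl.
  - intros [[_ (r & Hr & Ho)] Hl]; exact (HM _ (nn_qnot_rule _ _ Hr Ho) Hl).
  - intros Hx; apply expand_weight in Hx as [HQ Hcmp].
    exact (weight_complete _ _ HZ S s w HQ Hcmp).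
  - destruct q; [now destruct (Hq a)|contradiction..].
Qed.

Lemma answer_set_eq_expand Z : answer_set (nn O) Z -> Z = expand (restrict Z).
Proof.
  intros HA; apply litset_ext; intros x; split;
    [apply answer_set_sub_expand|apply expand_sub_answer_set]; exact HA.
Qed.

Lemma answer_set_restrict_model Z : answer_set (nn O) Z -> wpsat (restrict Z) O.
Proof.
  intros HA; pose proof (answer_set_eq_expand Z HA) as HE.
  apply answer_set_iff in HA as (_ & HM & _).
  intros r Hr HB.
  assert (Hbody : fsat Z (conj (body_nn (wbody r)))).
  { apply fsat_freduct_self, fsat_freduct_body; intros C HC.
    destruct (HB C HC) as [HL HU].
    destruct (Qset_body _ _ _ _ (nn_lo O r Hr) eq_refl HC) as [HQL _].
    split; rewrite HE; [now split|intros [_ Hlt]; exact (Rbar_lt_not_le _ _ Hlt HU)]. }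
  split; apply NNPP.
  - intros Hlo; apply (HM _ (nn_lo O r Hr)); cbn [snd]; apply fsat_conj_cons; split; [|exact Hbody].
    simpl; rewrite HE; intros [_ Hle]; exact (Hlo Hle).
  - intros Hhi; apply (HM _ (nn_hi O r Hr)); cbn [snd]; apply fsat_conj_cons; split; [|exact Hbody].
    simpl; rewrite HE; split; [|now apply Rbar_not_le_lt].
    apply (Qset_occurs _ _ (nn_hi O r Hr)); [|discriminate].
    right; apply fatom_conj_cons; left; reflexivity.
Qed.

(* The atoms of [Z] that remain derivable when the positive literals of [O]
   are read in [Y]; minimality of [Z] forces all of [Z] to be justified. *)
Definition justified (Z : litset (xatom A)) (Y : litset A) : litset (xatom A) := fun x =>
  Z x /\ match x with
         | Pos (Orig a) => Y (Pos a)
         | Neg (Orig a) => Y (Neg a)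
         | Pos (QLe w S0) => Rbar_le w (Finite (rsum Y (restrict Z) S0))
         | Pos (QLt w S0) => Rbar_lt w (Finite (rsum Y (restrict Z) S0))
         | _ => True
         end.

Lemma justified_liftl Z Y l : justified Z Y (liftl l) <-> Z (liftl l) /\ Y l.
Proof. destruct l; reflexivity. Qed.

Lemma justified_weight Z Y s w S :
  justified Z Y (Pos (qw s w S)) <->
  Z (Pos (qw s w S)) /\ Rbar_cmp s w (Finite (rsum Y (restrict Z) S)).
Proof. destruct s; reflexivity. Qed.

Lemma justified_reduct_model Z Y : answer_set (nn O) Z ->
  dsat Y (wreduct O (restrict Z)) -> reduct_model (nn O) (justified Z Y) Z.
Proof.
  intros HA HY; pose proof (answer_set_eq_expand Z HA) as HE.
  apply answer_set_iff in HA as (_ & HM & _).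
  assert (HJZ : forall x, justified Z Y x -> Z x) by now intros x [].
  intros r Hr HJb.
  assert (HZh : fsat Z (fst r)) by exact (HM r Hr (fsat_freduct_sub _ _ _ HJZ HJb)).
  destruct (nn_cases _ Hr)
    as [(l & ->)|[(r0 & l & w & Hr0 & Hin & ->)|[(r0 & _ & ->)|[(r0 & _ & ->)
       |(s & w & S & body & -> & Hrule)]]]]; cbn [fst snd] in *; try contradiction.
  - split; [exact HZh|exact I].
  - apply justified_liftl; split; [exact HZh|].
    apply fsat_freduct_cons in HJb as [_ Hb]; rewrite fsat_freduct_body in Hb.
    apply (HY (l, map (lreduct (restrict Z)) (wbody r0))).
    + exists r0; repeat split; eauto.
      intros C HC; apply Rbar_not_lt_le; intros Hlt.
      apply (proj2 (Hb C HC)); rewrite HE; split; [|exact Hlt].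
      exact (proj2 (Qset_body _ _ _ _ Hr eq_refl HC)).
    + intros LC HLC; apply in_map_iff in HLC as (C & <- & HC).
      apply lreduct_sat; exact (proj2 (proj1 (Hb C HC))).
  - apply justified_weight; split; [exact HZh|].
    apply (weight_rule_sound (justified Z Y) Z _ _ _ _ _ _ Hrule); auto.
    + intros l; now rewrite justified_liftl.
    + intros s' w' S' Hq; now apply justified_weight in Hq.
Qed.

Lemma answer_set_restrict Z : answer_set (nn O) Z -> w_answer_set O (restrict Z).
Proof.
  intros HA; split; [|split; [now apply answer_set_restrict_model|]].
  - intros a Ha; apply answer_set_iff in HA as (HC & _); exact (HC (Orig a) Ha).
  - intros l; split.
    + intros Hcl; apply Hcl; intros dr (r & _ & _ & _ & Hz & _) _; exact Hz.
    + intros Hl Y HY; apply answer_set_iff in HA as HA'; destruct HA' as (_ & _ & Hmin).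
      apply (Hmin (justified Z Y)) in Hl; [now apply justified_liftl in Hl|now intros x []|].
      now apply justified_reduct_model.
Qed.

Lemma expand_body X G F Cs : nn O (G, conj (F :: body_nn Cs)) ->
  fsat (expand X) (conj (F :: body_nn Cs)) ->
  fsat (expand X) F /\ forall C, In C Cs -> wcsat X C.
Proof.
  intros Hr Hb; rewrite fsat_conj_cons in Hb; destruct Hb as [HF Hb].
  split; [exact HF|intros C HC].
  rewrite <- fsat_freduct_self, fsat_freduct_body in Hb.
  destruct (Hb C HC) as [[_ HL] HU]; split; [exact HL|].
  apply Rbar_not_lt_le; intros Hlt; apply HU; split; [|exact Hlt].
  exact (proj2 (Qset_body _ _ _ _ Hr eq_refl HC)).
Qed.

Lemma expand_model X : wpsat X O -> psat (expand X) (nn O).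
Proof.
  intros HS r Hr Hb.
  destruct (nn_cases _ Hr)
    as [(l & ->)|[(r0 & l & w & _ & _ & ->)|[(r0 & Hr0 & ->)|[(r0 & Hr0 & ->)
       |(s & w & S & body & -> & Hrule)]]]]; cbn [fst snd] in *.
  - split; [|intros Hl; apply Hb, expand_liftl, Hl].
    apply (Qset_occurs _ _ Hr); [left; reflexivity|discriminate].
  - destruct (expand_body _ _ _ _ Hr Hb) as [Hn _].
    apply expand_liftl, NNPP; intros Hl; apply Hn; split; [|exact Hl].
    apply (Qset_occurs _ _ Hr); [|discriminate].
    right; apply fatom_conj_cons; left; reflexivity.
  - destruct (expand_body _ _ _ _ Hr Hb) as [Hn HB].
    apply Hn; split; [|exact (proj1 (HS r0 Hr0 HB))].
    apply (Qset_occurs _ _ Hr); [|discriminate].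
    right; apply fatom_conj_cons; left; reflexivity.
  - destruct (expand_body _ _ _ _ Hr Hb) as [[_ Hlt] HB].
    exact (Rbar_lt_not_le _ _ Hlt (proj2 (HS r0 Hr0 HB))).
  - apply expand_weight; split.
    + apply (Qset_occurs _ _ Hr); [left; reflexivity|apply qw_not_orig].
    + apply (weight_rule_sound (expand X) (expand X) _ _ _ _ _ _ Hrule).
      * intros l; apply expand_liftl.
      * intros l; apply expand_liftl.
      * intros s' w' S' Hq; now apply expand_weight in Hq.
      * now apply fsat_freduct_self.
Qed.

Lemma expand_answer_set X : w_answer_set O X -> answer_set (nn O) (expand X).
Proof.
  intros (Hcons & HS & Hcl); apply answer_set_iff.
  split; [now apply expand_consistent|split; [now apply expand_model|]].
  intros Y _ HY.
  assert (HXY : forall l, X l -> restrict Y l).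
  { intros l Hl; apply Hcl in Hl; apply Hl.
    intros [l0 LCs] (r & Hr & Hup & [w Hin] & Hx & Hs) Hlow; cbn [fst snd] in *; subst LCs.
    apply (HY _ (nn_head O r l0 w Hr Hin)); cbn [snd]; apply fsat_freduct_cons; split.
    - apply fsat_freduct_not; intros [_ Hn]; exact (Hn Hx).
    - apply fsat_freduct_body; intros C HC; split.
      + apply (weight_complete _ _ HY (welems C) false (wlo C)).
        * exact (proj1 (Qset_body _ _ _ _ (nn_head O r l0 w Hr Hin) eq_refl HC)).
        * rewrite restrict_expand; apply lreduct_sat, Hlow, in_map, HC.
      + intros [_ Hlt]; exact (Rbar_lt_not_le _ _ Hlt (Hup C HC)). }
  intros x; destruct (xlit_cases x) as [(l & ->)|[(l & ->)|[(s & w & S & ->)|(q & -> & Hq)]]].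
  - intros Hl; apply expand_liftl in Hl; exact (HXY l Hl).
  - intros [[_ (r & Hr & Ho)] Hl]; apply (HY _ (nn_qnot_rule _ _ Hr Ho)).
    cbn [snd]; apply fsat_freduct_not; intros Hx; apply Hl, expand_liftl, Hx.
  - intros Hx; apply expand_weight in Hx as [HQ Hcmp].
    apply (weight_complete _ _ HY S s w HQ); rewrite restrict_expand.
    eapply Rbar_cmp_le_trans; [exact Hcmp|].
    apply rsum_mono; [exact (Qset_weights_nonneg _ _ _ HQ)|exact HXY|auto].
  - destruct q; [now destruct (Hq a)|contradiction..].
Qed.

Lemma strip_liftl Z l : strip O Z (liftl l) <-> Z (liftl l).
Proof.
  unfold strip; split; [tauto|intros HZ; split; [exact HZ|]].
  intros (q & [Hq _] & Heq); destruct l; [injection Heq as <-; eapply Hq; reflexivity|discriminate].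
Qed.

Lemma strip_expand X x : strip O (expand X) x <-> embed X x.
Proof.
  destruct (xlit_cases x) as [(l & ->)|[(l & ->)|[(s & w & S & ->)|(q & -> & Hq)]]].
  - rewrite strip_liftl, expand_liftl; split; [intros Hl; now exists l|].
    intros (l' & Hl' & Heq); destruct l, l'; simpl in Heq; inversion Heq; subst; exact Hl'.
  - split; [intros [[HQ _] Hn]; exfalso; apply Hn; eauto|].
    intros (l' & _ & Heq); destruct l'; discriminate.
  - split; [intros [Hx Hn]; apply expand_weight in Hx as [HQ _]; exfalso; apply Hn; eauto|].
    intros (l' & _ & Heq); destruct l', s; discriminate.
  - destruct q; [now destruct (Hq a)|..];
      (split; [intros [[] _]|intros (l' & _ & Heq); destruct l'; discriminate]).
Qed.

End Translation.

Theorem theorem2 (A : Type) (O : wprogram A) (Hw : nonneg_weights O) :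
  (forall Z, answer_set (nn O) Z ->
     exists X, w_answer_set O X /\ forall x, strip O Z x <-> embed X x) /\
  (forall X, w_answer_set O X ->
     exists Z, answer_set (nn O) Z /\ forall x, strip O Z x <-> embed X x) /\
  (forall Z1 Z2, answer_set (nn O) Z1 -> answer_set (nn O) Z2 ->
     (forall x, strip O Z1 x <-> strip O Z2 x) -> forall x, Z1 x <-> Z2 x).
Proof.
  split; [|split].
  - intros Z HZ; exists (restrict Z); split; [now apply answer_set_restrict|].
    intros x; rewrite <- strip_expand, <- (answer_set_eq_expand O Hw Z HZ); tauto.
  - intros X HX; exists (expand O X); split; [now apply expand_answer_set|apply strip_expand].
  - intros Z1 Z2 H1 H2 Hs.
    assert (Hr : restrict Z1 = restrict Z2).
    { apply litset_ext; intros l; unfold restrict.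
      now rewrite <- (strip_liftl O Z1 l), <- (strip_liftl O Z2 l). }
    rewrite (answer_set_eq_expand O Hw Z1 H1), (answer_set_eq_expand O Hw Z2 H2), Hr.
    tauto.
Qed.
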